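(* Let $\langle D,E,e,\varepsilon\rangle$ be a restricted Priestley duality between a variety $\mathcal A$ and a category $\mathcal X$. Let $\mathbf A$ be a finite algebra in $\mathcal A$ and let $\mathbb X=D(\mathbf A)$. Then the following are equivalent: (1) $\mathbf A$ is semi-primal; (2) for each $\mathbb Y\in\mathcal X$ and every pair $\phi_1\colon\mathbb X\to\mathbb Y$, $\phi_2\colon\mathbb X\to\mathbb Y$ of jointly $\mathcal P$-surjective morphisms, either $\mathbb Y^\flat=\phi_1^\flat(\mathbb X^\flat)\,\dot\cup\,\phi_2^\flat(\mathbb X^\flat)$ or $\phi_1=\phi_2$.
   Context: $\mathcal D$ denotes the category of bounded distributive lattices and $\mathcal P$ the category of Priestley spaces (continuous order-preserving maps). $\mathbf 2$ is the two-element bounded lattice, $\mathbbm 2$ the discrete two-element chain. Priestley duality: $H(\mathbf L)=\mathcal D(\mathbf L,\mathbf 2)$ with order and topology from $\mathbbm 2^L$, $K(\mathbb X)=\mathcal P(\mathbb X,\mathbbm 2)$ with pointwise operations; morphisms act by precomposition; unit $e$ and counit $\varepsilon$ are evaluations. A restricted Priestley duality: $\mathcal A$ is a variety with a term reduct in $\mathcal D$ and forgetful functor ${}^\flat\colon\mathcal A\to\mathcal D$; $\mathcal X$ is a category with a functor ${}^\flat\colon\mathcal X\to\mathcal P$; $D\colon\mathcal A\to\mathcal X$, $E\colon\mathcal X\to\mathcal A$ form a dual equivalence with unit $e\colon\mathrm{id}\to ED$ and counit $\varepsilon\colon\mathrm{id}\to DE$ such that ${}^\flat\circ D=H\circ{}^\flat$,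 ${}^\flat\circ E=K\circ{}^\flat$, $e_{\mathbf A}^\flat=e_{\mathbf A^\flat}$ and $\varepsilon_{\mathbb X}^\flat=\varepsilon_{\mathbb X^\flat}$. Morphisms $\phi_1,\phi_2$ into $\mathbb Y$ are jointly $\mathcal P$-surjective if the union of the images of $\phi_1^\flat,\phi_2^\flat$ is all of $\mathbb Y^\flat$. $\mathbb Y^\flat=\phi_1^\flat(\mathbb X^\flat)\,\dot\cup\,\phi_2^\flat(\mathbb X^\flat)$ means the two images are disjoint, cover $\mathbb Y^\flat$, and no element of one is comparable to an element of the other. A finite algebra $\mathbf A$ is semi-primal if it has a majority term and every subalgebra of $\mathbf A^2$ is either a product of two subalgebras of $\mathbf A$ or is the graph $\{(b,b)\mid b\in B\}$ of the identity map on a subalgebra $\mathbf B$ of $\mathbf A$. *)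

From mathcomp Require Import all_boot.
From Stdlib Require Import List.

Set Implicit Arguments.
Unset Strict Implicit.
Unset Printing Implicit Defensive.

Record Sig := { Op : Type; ar : Op -> nat }.

Inductive term (S : Sig) (n : nat) : Type :=
  | tvar : 'I_n -> term S n
  | tapp : forall o : Op S, ('I_(ar o) -> term S n) -> term S n.

Record alg (S : Sig) := { acar :> Type; aop : forall o : Op S, ('I_(ar o) -> acar) -> acar }.

Fixpoint teval (S : Sig) (A : alg S) (n : nat) (v : 'I_n -> A) (t : term S n) : A :=
  match t with
  | tvar i => v i
  | tapp o args => @aop S A o (fun j => teval v (args j))
  end.

Definition models (S : Sig) (Sigma : forall n, term S n -> term S n -> Prop) (A : alg S) :=
  forall n (l r : term S n), Sigma n l r -> forall v : 'I_n -> A, teval v l = teval v r.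

Definition top0 (S : Sig) (A : alg S) (t : term S 0) : A :=
  teval (fun i : 'I_0 => False_rect A (notF (ltn_ord i))) t.
Definition top2 (S : Sig) (A : alg S) (t : term S 2) (x y : A) : A :=
  teval (fun i : 'I_2 => if val i == 0 then x else y) t.
Definition top3 (S : Sig) (A : alg S) (t : term S 3) (x y z : A) : A :=
  teval (fun i : 'I_3 => match val i with 0 => x | 1 => y | _ => z end) t.

Definition is_bdl (T : Type) (m j : T -> T -> T) (b t : T) : Prop :=
  [/\ (forall x y z, m x (m y z) = m (m x y) z /\ j x (j y z) = j (j x y) z),
      (forall x y, m x y = m y x /\ j x y = j y x),
      (forall x y, m x (j x y) = x /\ j x (m x y) = x),
      (forall x y z, m x (j y z) = j (m x y) (m x z))
    & (forall x, j b x = x /\ m t x = x)].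

(* A variety (equational class, Birkhoff) with a term reduct in the
   category of bounded distributive lattices. *)
Record Variety := {
  vsig : Sig;
  vSigma : forall n, term vsig n -> term vsig n -> Prop;
  vmeet : term vsig 2;  vjoin : term vsig 2;
  vbot : term vsig 0;   vtop : term vsig 0;
  vreduct : forall A : alg vsig, models vSigma A ->
     is_bdl (top2 vmeet (A:=A)) (top2 vjoin (A:=A)) (top0 A vbot) (top0 A vtop) }.

Arguments vSigma : clear implicits.
Arguments vmeet : clear implicits.
Arguments vjoin : clear implicits.
Arguments vbot : clear implicits.
Arguments vtop : clear implicits.

Definition Aobj (V : Variety) := { A : alg (vsig V) | models (vSigma V) A }.
Definition Aalg (V : Variety) (A : Aobj V) : alg (vsig V) := proj1_sig A.
Coercion Aalg : Aobj >-> alg.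

Definition lmeet (V : Variety) (A : alg (vsig V)) := top2 (A:=A) (vmeet V).
Definition ljoin (V : Variety) (A : alg (vsig V)) := top2 (A:=A) (vjoin V).
Definition lbot (V : Variety) (A : alg (vsig V)) := top0 A (vbot V).
Definition ltop (V : Variety) (A : alg (vsig V)) := top0 A (vtop V).

Definition ahom (S : Sig) (A B : alg S) :=
  { f : A -> B | forall o (args : 'I_(ar o) -> A), f (@aop S A o args) = @aop S B o (fun i => f (args i)) }.

Definition ahom_id (S : Sig) (A : alg S) : ahom A A.
Proof. by exists (fun x => x). Defined.

Lemma ahom_comp_proof (S : Sig) (A B C : alg S) (g : ahom B C) (f : ahom A B) :
  forall o (args : 'I_(ar o) -> A),
   proj1_sig g (proj1_sig f (@aop S A o args)) = @aop S C o (fun i => proj1_sig g (proj1_sig f (args i))).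
Proof. by move=> o args; rewrite (proj2_sig f) (proj2_sig g). Qed.

Definition ahom_comp (S : Sig) (A B C : alg S) (g : ahom B C) (f : ahom A B) : ahom A C :=
  exist _ (fun x => proj1_sig g (proj1_sig f x)) (ahom_comp_proof g f).

Definition subuniverse (S : Sig) (A : alg S) (B : A -> Prop) : Prop :=
  forall o (args : 'I_(ar o) -> A), (forall i, B (args i)) -> B (@aop S A o args).

Definition subuniverse2 (S : Sig) (A : alg S) (R : A -> A -> Prop) : Prop :=
  forall o (args : 'I_(ar o) -> A * A), (forall i, R (args i).1 (args i).2) ->
    R (@aop S A o (fun i => (args i).1)) (@aop S A o (fun i => (args i).2)).

Definition finite_alg (S : Sig) (A : alg S) : Prop := exists l : list A, forall x : A, In x l.

Definition has_majority_term (S : Sig) (A : alg S) : Prop :=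
  exists t : term S 3, forall x y : A,
    [/\ top3 t x x y = x, top3 t x y x = x & top3 t y x x = x].

Definition semi_primal (S : Sig) (A : alg S) : Prop :=
  has_majority_term A /\
  forall R : A -> A -> Prop, subuniverse2 R ->
    (exists B1 B2 : A -> Prop, [/\ subuniverse B1, subuniverse B2 &
                                  forall x y, R x y <-> B1 x /\ B2 y])
    \/ (exists B : A -> Prop, subuniverse B /\ forall x y, R x y <-> x = y /\ B x).

Definition is_priestley (T : Type) (le : T -> T -> Prop) (open : (T -> Prop) -> Prop) : Prop :=
  [/\
      (forall x, le x x) /\ (forall x y z, le x y -> le y z -> le x z) /\
      (forall x y, le x y -> le y x -> x = y),
      open (fun _ => True) /\
      (forall U V, open U -> open V -> open (fun x => U x /\ V x)) /\
      (forall (I : Type) (F : I -> T -> Prop), (forall i, open (F i)) ->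
          open (fun x => exists i, F i x)),
      (forall (I : Type) (F : I -> T -> Prop), (forall i, open (F i)) ->
          (forall x, exists i, F i x) ->
          exists l : list I, forall x, exists i, In i l /\ F i x)
    &
      (forall x y, ~ le x y -> exists U : T -> Prop,
          [/\ open U, open (fun z => ~ U z), (forall a b, le a b -> U a -> U b), U x & ~ U y])].

Record PSpace := { pcar :> Type; ple : pcar -> pcar -> Prop;
                   popen : (pcar -> Prop) -> Prop; ps_ax : is_priestley ple popen }.

Record PMor (X Y : PSpace) := { pmap :> X -> Y;
  pmap_mono : forall x y, ple x y -> ple (pmap x) (pmap y);
  pmap_cont : forall U, popen U -> popen (fun x => U (pmap x)) }.

Definition PData := { T : Type & ((T -> T -> Prop) * ((T -> Prop) -> Prop))%type }.
Definition ps_data (X : PSpace) : PData := existT _ (pcar X) (@ple X, @popen X).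

(* H(A^flat): bounded lattice homomorphisms A^flat -> 2, with the order
   and (product, i.e. pointwise-convergence) topology induced from 2^A *)
Definition Hcar (V : Variety) (A : alg (vsig V)) : Type :=
  { f : A -> bool | [/\ (forall x y, f (lmeet x y) = f x && f y),
                        (forall x y, f (ljoin x y) = f x || f y),
                        f (lbot A) = false & f (ltop A) = true] }.

Definition Hle (V : Variety) (A : alg (vsig V)) (f g : Hcar A) : Prop :=
  forall x, proj1_sig f x -> proj1_sig g x.

Definition Hopen (V : Variety) (A : alg (vsig V)) (U : Hcar A -> Prop) : Prop :=
  forall f, U f -> exists s : list (A * bool),
    (forall p, In p s -> proj1_sig f p.1 = p.2) /\
    (forall g, (forall p, In p s -> proj1_sig g p.1 = p.2) -> U g).

Definition Hdata (V : Variety) (A : alg (vsig V)) : PData :=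
  existT _ (Hcar A) (@Hle V A, @Hopen V A).

(* K(Y): continuous order-preserving maps Y -> 2 (2 discrete) *)
Definition Kcar (Y : PSpace) : Type :=
  { f : Y -> bool | [/\ (forall x y, ple x y -> f x -> f y),
                        popen (fun x => f x = true) & popen (fun x => f x = false)] }.

Definition cast (T U : Type) (p : T = U) (x : T) : U := match p in _ = U' return U' with erefl => x end.

Definition castD (X : PSpace) (V : Variety) (A : alg (vsig V)) (p : ps_data X = Hdata A) :
  pcar X -> Hcar A := cast (f_equal (@projT1 _ _) p).

Record Cat := {
  Ob : Type;
  Hom : Ob -> Ob -> Type;
  cid : forall a, Hom a a;
  ccomp : forall a b c, Hom b c -> Hom a b -> Hom a c;
  ccomp_idl : forall a b (f : Hom a b), ccomp (cid b) f = f;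
  ccomp_idr : forall a b (f : Hom a b), ccomp f (cid a) = f;
  ccomp_assoc : forall a b c d (h : Hom c d) (g : Hom b c) (f : Hom a b),
      ccomp h (ccomp g f) = ccomp (ccomp h g) f }.
Arguments cid {_} _.
Arguments Hom : clear implicits.
Arguments Ob : clear implicits.
Arguments ccomp {_ _ _ _} _ _.

Record PCat := {
  pcat :> Cat;
  fob : Ob pcat -> PSpace;
  fmor : forall a b, Hom pcat a b -> PMor (fob a) (fob b);
  fmor_id : forall a (x : fob a), fmor (cid a) x = x;
  fmor_comp : forall a b c (g : Hom pcat b c) (f : Hom pcat a b) (x : fob a),
      fmor (ccomp g f) x = fmor g (fmor f x) }.
Arguments fmor {p a b}.

Record RPDuality (V : Variety) (X : PCat) := {
  Dob : Aobj V -> Ob X;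
  Dmor : forall A B : Aobj V, ahom A B -> Hom X (Dob B) (Dob A);
  Eob : Ob X -> Aobj V;
  Emor : forall Y Z : Ob X, Hom X Y Z -> ahom (Eob Z) (Eob Y);
  Dmor_id : forall A : Aobj V, Dmor (ahom_id A) = cid (Dob A);
  Dmor_comp : forall (A B C : Aobj V) (g : ahom B C) (f : ahom A B),
      Dmor (ahom_comp g f) = ccomp (Dmor f) (Dmor g);
  Emor_id : forall (Y : Ob X) (u : Eob Y), proj1_sig (Emor (cid Y)) u = u;
  Emor_comp : forall (Y Z W : Ob X) (g : Hom X Z W) (f : Hom X Y Z) (u : Eob W),
      proj1_sig (Emor (ccomp g f)) u = proj1_sig (Emor f) (proj1_sig (Emor g) u);
  unit : forall A : Aobj V, ahom A (Eob (Dob A));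
  unit_nat : forall (A B : Aobj V) (h : ahom A B) (a : A),
      proj1_sig (Emor (Dmor h)) (proj1_sig (unit A) a) = proj1_sig (unit B) (proj1_sig h a);
  unit_iso : forall A : Aobj V, exists g : ahom (Eob (Dob A)) A,
      (forall a, proj1_sig g (proj1_sig (unit A) a) = a) /\
      (forall u, proj1_sig (unit A) (proj1_sig g u) = u);
  counit : forall Y : Ob X, Hom X Y (Dob (Eob Y));
  counit_nat : forall (Y Z : Ob X) (psi : Hom X Y Z),
      ccomp (Dmor (Emor psi)) (counit Y) = ccomp (counit Z) psi;
  counit_iso : forall Y : Ob X, exists g : Hom X (Dob (Eob Y)) Y,
      ccomp g (counit Y) = cid Y /\ ccomp (counit Y) g = cid (Dob (Eob Y));
  flatD : forall A : Aobj V, ps_data (fob (Dob A)) = Hdata A;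
  flatD_mor : forall (A B : Aobj V) (h : ahom A B) (phi : fob (Dob B)) (a : A),
      proj1_sig (castD (flatD A) (fmor (Dmor h) phi)) a
      = proj1_sig (castD (flatD B) phi) (proj1_sig h a);
  (* ^flat o E = K o ^flat (carrier, and pointwise bounded-lattice operations) *)
  flatE : forall Y : Ob X, acar (Eob Y) = Kcar (fob Y);
  flatE_meet : forall (Y : Ob X) (u v : Eob Y) (y : fob Y),
      proj1_sig (cast (flatE Y) (lmeet u v)) y
      = proj1_sig (cast (flatE Y) u) y && proj1_sig (cast (flatE Y) v) y;
  flatE_join : forall (Y : Ob X) (u v : Eob Y) (y : fob Y),
      proj1_sig (cast (flatE Y) (ljoin u v)) y
      = proj1_sig (cast (flatE Y) u) y || proj1_sig (cast (flatE Y) v) y;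
  flatE_bot : forall (Y : Ob X) (y : fob Y), proj1_sig (cast (flatE Y) (lbot (Eob Y))) y = false;
  flatE_top : forall (Y : Ob X) (y : fob Y), proj1_sig (cast (flatE Y) (ltop (Eob Y))) y = true;
  flatE_mor : forall (Y Z : Ob X) (psi : Hom X Y Z) (u : Eob Z) (y : fob Y),
      proj1_sig (cast (flatE Y) (proj1_sig (Emor psi) u)) y
      = proj1_sig (cast (flatE Z) u) (fmor psi y);
  flat_unit : forall (A : Aobj V) (a : A) (phi : fob (Dob A)),
      proj1_sig (cast (flatE (Dob A)) (proj1_sig (unit A) a)) phi
      = proj1_sig (castD (flatD A) phi) a;
  flat_counit : forall (Y : Ob X) (y : fob Y) (u : Eob Y),
      proj1_sig (castD (flatD (Eob Y)) (fmor (counit Y) y)) u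
      = proj1_sig (cast (flatE Y) u) y }.

Definition jointly_surj (X : PCat) (Z Y : Ob X) (f1 f2 : Hom X Z Y) : Prop :=
  forall y : fob Y, exists x : fob Z, fmor f1 x = y \/ fmor f2 x = y.

Definition disj_union_images (X : PCat) (Z Y : Ob X) (f1 f2 : Hom X Z Y) : Prop :=
  [/\ (forall y : fob Y, exists x : fob Z, fmor f1 x = y \/ fmor f2 x = y),
      (forall x x' : fob Z, fmor f1 x <> fmor f2 x')
    & (forall x x' : fob Z, ~ ple (fmor f1 x) (fmor f2 x') /\ ~ ple (fmor f2 x') (fmor f1 x))].

From mathcomp Require Import all_boot boolp.
From Stdlib Require List.

Set Implicit Arguments.
Unset Strict Implicit.
Unset Printing Implicit Defensive.

(** If A is semi-primal and phi1, phi2 : D(A) -> Y, the pairs (a, b) such that e(a) and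
    e(b) are the images of one u in E(Y) under E(phi1) and E(phi2) form a subalgebra of
    A x A.  If it is a product it contains (1, 0) and (0, 1), and the corresponding u are
    clopen up-sets of Y separating the two images; if it is a diagonal, E(phi1) = E(phi2)
    and hence phi1 = phi2.

    Conversely, let R be a subalgebra of A x A with projections pi1, pi2.  Every prime
    filter of the finite lattice R is pulled back from A along a projection: its least
    element is not below its largest non-element in some coordinate, and a prime filter of
    A separating them does the job.  So D(pi1), D(pi2) are jointly surjective.  If
    D(R) is the disjoint union of their images, the image of D(pi1) is a clopen up-set,
    i.e. an element r of R with pi1 r = 1 and pi2 r = 0; together with the symmetric
    element it shows that R is the product of its projections.  If D(pi1) = D(pi2) then
    pi1 = pi2 and R is the diagonal.  The majority term is the lattice median. *)

(* [cid] is the choice operator of [boolp]; it shadows the identity field of [Cat]. *)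

Lemma proj1_sig_inj (T : Type) (P : T -> Prop) : injective (@proj1_sig T P).
Proof. by case=> x px [y py] /= exy; exact: eq_exist. Qed.

Lemma castK (T U : Type) (p : T = U) : cancel (cast p) (cast (esym p)).
Proof. by case: U / p. Qed.

Lemma castKV (T U : Type) (p : T = U) : cancel (cast (esym p)) (cast p).
Proof. by case: U / p. Qed.

Section FiniteMinimal.
Variables (T : Type) (le : T -> T -> Prop).
Hypotheses (le_refl : forall x, le x x)
  (le_trans : forall x y z, le x y -> le y z -> le x z)
  (le_anti : forall x y, le x y -> le y x -> x = y).

Lemma count_lt_subpred (p q : pred T) (s : seq T) z :
  subpred p q -> List.In z s -> q z -> ~~ p z -> count p s < count q s.
Proof.
move=> pq; elim: s => //= x s IH [<-|zs] qz pz.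
  by rewrite (negbTE pz) qz add0n add1n ltnS sub_count.
rewrite -addnS leq_add ?IH //.
by case px: (p x); rewrite ?(pq _ px).
Qed.

Lemma finite_minimal (s : seq T) (P : T -> Prop) d0 :
  (forall x, List.In x s) -> P d0 ->
  exists2 c, P c & forall d, P d -> le d c -> d = c.
Proof.
move=> covers Pd0; pose below c := count (fun z => `[< le z c >]) s.
have exN : exists n, `[< exists d, P d /\ below d = n >].
  by exists (below d0); apply/asboolP; exists d0.
case: (ex_minnP exN) => _ /asboolP [c [Pc <-]] minN; exists c => // d Pd dc.
apply: contrapT => ndc; suff : below d < below c.
  by rewrite ltnNge minN //; apply/asboolP; exists d.
apply: (count_lt_subpred (z := c)) => //.
- by move=> z /asboolP zd; apply/asboolP; exact: le_trans dc.
- exact/asboolP.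
- by apply/asboolP => cd; apply: ndc; exact: le_anti.
Qed.

End FiniteMinimal.

Section UniversalAlgebra.
Variables (S : Sig) (A : alg S).

Lemma subuniverse_teval (B : A -> Prop) n (v : 'I_n -> A) (t : term S n) :
  subuniverse B -> (forall i, B (v i)) -> B (teval v t).
Proof. by move=> sB Bv; elim: t => [i|o args IH] //=; apply: sB. Qed.

Lemma subuniverse_top0 (B : A -> Prop) (t : term S 0) : subuniverse B -> B (top0 A t).
Proof. by move=> sB; apply: subuniverse_teval sB _ => -[]. Qed.

Lemma subuniverse2_teval (R : A -> A -> Prop) n (v1 v2 : 'I_n -> A) (t : term S n) :
  subuniverse2 R -> (forall i, R (v1 i) (v2 i)) -> R (teval v1 t) (teval v2 t).
Proof.
move=> sR Rv; elim: t => [i|o args IH] //=.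
exact: (sR o (fun j => (teval v1 (args j), teval v2 (args j)))).
Qed.

Lemma subuniverse2_top2 (R : A -> A -> Prop) (t : term S 2) x1 x2 y1 y2 :
  subuniverse2 R -> R x1 x2 -> R y1 y2 -> R (top2 t x1 y1) (top2 t x2 y2).
Proof. by move=> sR Rx Ry; apply: subuniverse2_teval => // i; case: (val i == 0). Qed.

Lemma subuniverse_rel_dom (R : A -> A -> Prop) :
  subuniverse2 R -> subuniverse (fun x => exists y, R x y).
Proof.
move=> sR o args Rargs; pose y i := proj1_sig (cid (Rargs i)).
exists (aop y); exact: (sR o (fun i => (args i, y i)) (fun i => proj2_sig (cid (Rargs i)))).
Qed.

Lemma subuniverse_rel_codom (R : A -> A -> Prop) :
  subuniverse2 R -> subuniverse (fun y => exists x, R x y).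
Proof.
move=> sR o args Rargs; pose x i := proj1_sig (cid (Rargs i)).
exists (aop x); exact: (sR o (fun i => (x i, args i)) (fun i => proj2_sig (cid (Rargs i)))).
Qed.

Lemma subuniverse_rel_diag (R : A -> A -> Prop) :
  subuniverse2 R -> subuniverse (fun x => R x x).
Proof. by move=> sR o args; apply: (sR o (fun i => (args i, args i))). Qed.

End UniversalAlgebra.

Fixpoint tsubst (S : Sig) n m (s : 'I_n -> term S m) (t : term S n) : term S m :=
  match t with
  | tvar i => s i
  | tapp o args => tapp (fun j => tsubst s (args j))
  end.

Lemma teval_tsubst (S : Sig) (A : alg S) n m (v : 'I_m -> A) (s : 'I_n -> term S m) t :
  teval v (tsubst s t) = teval (fun i => teval v (s i)) t.
Proof. by elim: t => [i|o args IH] //=; congr aop; apply: funext. Qed.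

Section RelationAlgebra.
Variables (S : Sig) (A : alg S) (R : A -> A -> Prop) (HR : subuniverse2 R).

Definition rel_alg : alg S := {|
  acar := { p : A * A | R p.1 p.2 };
  aop := fun o args => exist (fun p : A * A => R p.1 p.2)
    (aop (fun i => (proj1_sig (args i)).1), aop (fun i => (proj1_sig (args i)).2))
    (@HR o (fun i => proj1_sig (args i)) (fun i => proj2_sig (args i))) |}.

Lemma teval_rel_alg n (v : 'I_n -> rel_alg) (t : term S n) :
  proj1_sig (teval v t)
  = (teval (fun i => (proj1_sig (v i)).1) t, teval (fun i => (proj1_sig (v i)).2) t).
Proof.
elim: t => [i|o args IH] /=; first by case: (proj1_sig (v i)).
by congr pair; congr aop; apply: funext => j; rewrite IH.
Qed.

Lemma rel_alg_models (Sigma : forall n, term S n -> term S n -> Prop) :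
  models Sigma A -> models Sigma rel_alg.
Proof.
by move=> HA n l r Slr v; apply: proj1_sig_inj; rewrite !teval_rel_alg !(HA n l r).
Qed.

Lemma rel_alg_finite : finite_alg A -> finite_alg rel_alg.
Proof.
case=> s covers.
pose pairs_in a b : seq rel_alg :=
  if pselect (R a b) is left Rab then [:: exist _ (a, b) Rab] else [::].
exists (List.flat_map (fun a => List.flat_map (pairs_in a) s) s).
case=> [[a b] Rab]; apply/List.in_flat_map; exists a; split => //.
apply/List.in_flat_map; exists b; split => //; rewrite /pairs_in.
by case: pselect => // Rab'; left; apply: proj1_sig_inj.
Qed.

End RelationAlgebra.

Section LatticeHoms.
Variables (V : Variety) (A : alg (vsig V)).
Implicit Types (f : Hcar A) (x y : A).

Definition lle x y : Prop := lmeet x y = x.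

Lemma hom_meet f x y : proj1_sig f (lmeet x y) = proj1_sig f x && proj1_sig f y.
Proof. by case: f => f []. Qed.

Lemma hom_join f x y : proj1_sig f (ljoin x y) = proj1_sig f x || proj1_sig f y.
Proof. by case: f => f []. Qed.

Lemma hom_bot f : proj1_sig f (lbot A) = false.
Proof. by case: f => f []. Qed.

Lemma hom_top f : proj1_sig f (ltop A) = true.
Proof. by case: f => f []. Qed.

Lemma hom_le f x y : lle x y -> proj1_sig f x -> proj1_sig f y.
Proof. by move=> xy; rewrite -xy hom_meet => /andP[]. Qed.

Lemma hom_eq f g : proj1_sig f =1 proj1_sig g -> f = g.
Proof. by move=> fg; apply: proj1_sig_inj; apply: funext. Qed.

End LatticeHoms.

Section Lattice.
Variables (V : Variety) (A : Aobj V).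
Implicit Types x y z : A.

Let bdl := vreduct (proj2_sig A).

Lemma lmeetC x y : lmeet x y = lmeet y x. Proof. by case: bdl => _ /(_ x y)[]. Qed.
Lemma ljoinC x y : ljoin x y = ljoin y x. Proof. by case: bdl => _ /(_ x y)[]. Qed.
Lemma lmeetA x y z : lmeet x (lmeet y z) = lmeet (lmeet x y) z.
Proof. by case: bdl => /(_ x y z)[]. Qed.
Lemma lmeetKU x y : lmeet x (ljoin x y) = x. Proof. by case: bdl => _ _ /(_ x y)[]. Qed.
Lemma ljoinKI x y : ljoin x (lmeet x y) = x. Proof. by case: bdl => _ _ /(_ x y)[]. Qed.
Lemma lmeetUr x y z : lmeet x (ljoin y z) = ljoin (lmeet x y) (lmeet x z).
Proof. by case: bdl => _ _ _ /(_ x y z). Qed.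
Lemma ljoin0x x : ljoin (lbot A) x = x. Proof. by case: bdl => _ _ _ _ /(_ x)[]. Qed.
Lemma lmeet1x x : lmeet (ltop A) x = x. Proof. by case: bdl => _ _ _ _ /(_ x)[]. Qed.

Lemma lmeetxx x : lmeet x x = x. Proof. by rewrite -{2}(ljoinKI x x) lmeetKU. Qed.
Lemma ljoinxx x : ljoin x x = x. Proof. by rewrite -{2}(lmeetKU x x) ljoinKI. Qed.
Lemma lmeetx0 x : lmeet x (lbot A) = lbot A. Proof. by rewrite lmeetC -{1}(ljoin0x x) lmeetKU. Qed.
Lemma lmeetx1 x : lmeet x (ltop A) = x. Proof. by rewrite lmeetC lmeet1x. Qed.
Lemma ljoinx0 x : ljoin x (lbot A) = x. Proof. by rewrite ljoinC ljoin0x. Qed.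

Lemma lle_refl x : lle x x. Proof. exact: lmeetxx. Qed.
Lemma lle_trans x y z : lle x y -> lle y z -> lle x z.
Proof. by move=> xy yz; rewrite /lle -xy -lmeetA yz. Qed.
Lemma lle_anti x y : lle x y -> lle y x -> x = y.
Proof. by move=> xy yx; rewrite -xy lmeetC yx. Qed.
Lemma lle0x x : lle (lbot A) x. Proof. by rewrite /lle lmeetC lmeetx0. Qed.
Lemma llex1 x : lle x (ltop A). Proof. exact: lmeetx1. Qed.
Lemma lleIl x y : lle (lmeet x y) x. Proof. by rewrite /lle lmeetC lmeetA lmeetxx. Qed.
Lemma lleIr x y : lle (lmeet x y) y. Proof. by rewrite lmeetC; exact: lleIl. Qed.
Lemma lleUl x y : lle x (ljoin x y). Proof. exact: lmeetKU. Qed.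
Lemma lleUr x y : lle y (ljoin x y). Proof. by rewrite ljoinC; exact: lleUl. Qed.
Lemma llexI x y z : lle x y -> lle x z -> lle x (lmeet y z).
Proof. by move=> xy xz; rewrite /lle lmeetA xy xz. Qed.
Lemma lleUx x y z : lle x z -> lle y z -> lle (ljoin x y) z.
Proof. by move=> xz yz; rewrite /lle lmeetC lmeetUr (lmeetC z x) (lmeetC z y) xz yz. Qed.

Lemma median_majority_term : has_majority_term A.
Proof.
pose bin (t : term (vsig V) 2) (a b : term (vsig V) 3) :=
  tsubst (fun i : 'I_2 => if val i == 0 then a else b) t.
pose var (k : nat) (lt_k3 : k < 3) := tvar (vsig V) (Ordinal lt_k3).
pose M := bin (vmeet V); pose J := bin (vjoin V).
pose X := var 0 isT; pose Y := var 1 isT; pose Z := var 2 isT.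
exists (J (J (M X Y) (M Y Z)) (M X Z)).
have evalM a b (v : 'I_3 -> A) : teval v (M a b) = lmeet (teval v a) (teval v b).
  by rewrite teval_tsubst; congr teval; apply: funext => i; case: (val i == 0).
have evalJ a b (v : 'I_3 -> A) : teval v (J a b) = ljoin (teval v a) (teval v b).
  by rewrite teval_tsubst; congr teval; apply: funext => i; case: (val i == 0).
move=> x y; rewrite /top3 !evalJ !evalM /=; split.
- by rewrite lmeetxx !ljoinKI.
- by rewrite (lmeetC y x) ljoinxx lmeetxx ljoinC ljoinKI.
- by rewrite lmeetxx (lmeetC y x) (ljoinC (lmeet x y) x) !ljoinKI.
Qed.

Lemma subuniverse2_product (R : A -> A -> Prop) :
  subuniverse2 R -> R (ltop A) (lbot A) -> R (lbot A) (ltop A) ->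
  forall x y, R x y <-> (exists y', R x y') /\ (exists x', R x' y).
Proof.
move=> sR Rtb Rbt x y; split=> [Rxy|[[y' Rxy'] [x' Rx'y]]]; first by split; [exists y|exists x].
have R_meet a b c d : R a b -> R c d -> R (lmeet a c) (lmeet b d).
  exact: subuniverse2_top2.
have R_join a b c d : R a b -> R c d -> R (ljoin a c) (ljoin b d).
  exact: subuniverse2_top2.
(* (x, y) = ((x, y') meet (1, 0)) join ((x', y) meet (0, 1)) *)
have := R_join _ _ _ _ (R_meet _ _ _ _ Rxy' Rtb) (R_meet _ _ _ _ Rx'y Rbt).
by rewrite lmeetx1 !lmeetx0 lmeetx1 ljoinx0 ljoin0x.
Qed.

End Lattice.

Section FiniteLattice.
Variables (V : Variety) (A : Aobj V).
Hypothesis finA : finite_alg A.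
Implicit Types (f : Hcar A) (a b c x y : A).

Lemma lle_minimal (P : A -> Prop) d0 :
  P d0 -> exists2 c, P c & forall d, P d -> lle d c -> d = c.
Proof.
case: finA => s.
exact: (@finite_minimal _ _ (@lle_refl _ A) (@lle_trans _ A) (@lle_anti _ A) s P).
Qed.

Lemma lle_maximal (P : A -> Prop) d0 :
  P d0 -> exists2 c, P c & forall d, P d -> lle c d -> d = c.
Proof.
case: finA => s covers.
apply: (@finite_minimal _ (fun x y => lle y x) _ _ _ s P) covers => [x|x y z yx zy|x y yx xy].
- exact: lle_refl.
- exact: lle_trans zy yx.
- exact: lle_anti.
Qed.

Definition join_prime c :=
  ~ lle c (lbot A) /\ forall x y, lle c (ljoin x y) -> lle c x \/ lle c y.

Lemma minimal_join_prime a b : ~ lle a b -> exists c, [/\ join_prime c, lle c a & ~ lle c b].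
Proof.
move=> nab.
have [c [ca ncb] cmin] := lle_minimal (P := fun d => lle d a /\ ~ lle d b) (conj (lle_refl a) nab).
exists c; split=> //; split=> [c0|x y cxy]; first by apply: ncb; exact: lle_trans c0 (lle0x b).
have [cx|ncx] := pselect (lle c x); first by left.
have [cy|ncy] := pselect (lle c y); first by right.
have meet_below_b z : ~ lle c z -> lle (lmeet c z) b.
  move=> ncz; apply: contrapT => nczb; apply: ncz; apply: (cmin _ _ (lleIl c z)).
  by split=> //; exact: lle_trans (lleIl c z) ca.
exfalso; apply: ncb; have -> : c = ljoin (lmeet c x) (lmeet c y) by rewrite -lmeetUr cxy.
exact: lleUx (meet_below_b x ncx) (meet_below_b y ncy).
Qed.

Lemma join_prime_hom c : join_prime c -> exists f, forall x, proj1_sig f x = `[< lle c x >].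
Proof.
case=> nc0 cprime.
have hom : [/\ forall x y, `[< lle c (lmeet x y) >] = `[< lle c x >] && `[< lle c y >],
               forall x y, `[< lle c (ljoin x y) >] = `[< lle c x >] || `[< lle c y >],
               `[< lle c (lbot A) >] = false & `[< lle c (ltop A) >] = true].
  split=> [x y|x y||]; last exact/asboolP/llex1; last exact/negbTE/asboolPn.
  - apply/asboolP/andP => [cxy|[/asboolP cx /asboolP cy]]; last exact: llexI.
    by split; apply/asboolP; [exact: lle_trans cxy (lleIl x y)|exact: lle_trans cxy (lleIr x y)].
  - apply/asboolP/orP => [/cprime[] cz|[] /asboolP cz]; [left|right|..]; try exact/asboolP.
    + exact: lle_trans cz (lleUl x y).
    + exact: lle_trans cz (lleUr x y).
by exists (exist _ (fun x => `[< lle c x >]) hom).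
Qed.

Lemma separation a b : ~ lle a b -> exists f, proj1_sig f a /\ ~~ proj1_sig f b.
Proof.
case/minimal_join_prime=> c [/join_prime_hom [f ef] ca ncb].
by exists f; rewrite !ef; split; [exact/asboolP|exact/asboolPn].
Qed.

Lemma hom_true_top a : (forall f, proj1_sig f a) -> a = ltop A.
Proof.
move=> true_a; apply: lle_anti (llex1 a) _; apply: contrapT.
by case/separation=> f [_ /negP]; apply.
Qed.

Lemma hom_false_bot a : (forall f, ~~ proj1_sig f a) -> a = lbot A.
Proof.
move=> false_a; apply: lle_anti _ (lle0x a); apply: contrapT.
by case/separation=> f [fa _]; move: (false_a f); rewrite fa.
Qed.

Lemma hom_least_true f : exists2 m, proj1_sig f m & forall r, proj1_sig f r -> lle m r.
Proof.
have [m fm mmin] := lle_minimal (P := fun x => proj1_sig f x) (hom_top f).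
exists m => // r fr; apply: mmin (lleIl m r); by rewrite hom_meet fm.
Qed.

Lemma hom_greatest_false f : exists2 j, ~~ proj1_sig f j & forall r, ~~ proj1_sig f r -> lle r j.
Proof.
have [j fj jmax] := lle_maximal (P := fun x => ~~ proj1_sig f x) (negbT (hom_bot f)).
exists j => // r fr; rewrite /lle -(jmax (ljoin j r)); last exact: lleUl.
- by rewrite ljoinC lmeetKU.
- by rewrite hom_join negb_or fj.
Qed.

Lemma hom_factors_through (B : Aobj V) (p : B -> A) (h : Hcar B) (m j : B) :
  (forall u v, p (lmeet u v) = lmeet (p u) (p v)) ->
  (forall r, proj1_sig h r -> lle m r) -> (forall r, ~~ proj1_sig h r -> lle r j) ->
  ~ lle (p m) (p j) -> exists f, forall r, proj1_sig h r = proj1_sig f (p r).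
Proof.
move=> p_meet mleast jgreatest /separation [f [fm fj]]; exists f => r.
case hr: (proj1_sig h r).
- by apply/esym/(hom_le (x := p m)) => //; rewrite /lle -p_meet (mleast r hr).
- have rj := jgreatest r (negbT hr).
  by rewrite -rj p_meet hom_meet (negbTE fj) andbF.
Qed.

End FiniteLattice.

Section RelationObject.
Variables (V : Variety) (A : Aobj V) (R : A -> A -> Prop) (HR : subuniverse2 R).

Definition rel_obj : Aobj V := exist _ (rel_alg HR) (rel_alg_models (HR := HR) (proj2_sig A)).

Definition rel_fst : ahom rel_obj A.
Proof. by exists (fun r => (proj1_sig r).1). Defined.

Definition rel_snd : ahom rel_obj A.
Proof. by exists (fun r => (proj1_sig r).2). Defined.

Lemma rel_meet (r r' : rel_obj) :
  proj1_sig (lmeet r r')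
  = (lmeet (proj1_sig r).1 (proj1_sig r').1, lmeet (proj1_sig r).2 (proj1_sig r').2).
Proof.
rewrite /lmeet /top2 teval_rel_alg.
by congr pair; congr teval; apply: funext => i; case: (val i == 0).
Qed.

Lemma rel_hom_factors : finite_alg A -> forall h : Hcar rel_obj, exists f : Hcar A,
  (forall r, proj1_sig h r = proj1_sig f (proj1_sig r).1) \/
  (forall r, proj1_sig h r = proj1_sig f (proj1_sig r).2).
Proof.
move=> finA h; have finR : finite_alg rel_obj := rel_alg_finite HR finA.
have [m hm mleast] := hom_least_true finR h.
have [j hj jgreatest] := hom_greatest_false finR h.
have [le1|nle1] := pselect (lle (proj1_sig m).1 (proj1_sig j).1); last first.
  have [f ef] := hom_factors_through finA (p := fun r : rel_obj => (proj1_sig r).1)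
    (fun r r' => f_equal fst (rel_meet r r')) mleast jgreatest nle1.
  by exists f; left.
have [le2|nle2] := pselect (lle (proj1_sig m).2 (proj1_sig j).2); last first.
  have [f ef] := hom_factors_through finA (p := fun r : rel_obj => (proj1_sig r).2)
    (fun r r' => f_equal snd (rel_meet r r')) mleast jgreatest nle2.
  by exists f; right.
have mj : lle m j by apply: proj1_sig_inj; rewrite rel_meet le1 le2; case: (proj1_sig m).
by move: (hom_le mj hm); rewrite (negbTE hj).
Qed.

End RelationObject.

Lemma Hopen_finite (V : Variety) (B : alg (vsig V)) :
  finite_alg B -> forall U : Hcar B -> Prop, Hopen U.
Proof.
case=> s covers U f Uf; exists (List.map (fun a => (a, proj1_sig f a)) s); split.
  by move=> _ /List.in_map_iff [a [<- _]].
move=> g eq_g; suff -> : g = f by [].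
apply: hom_eq => a; apply: (eq_g (a, proj1_sig f a)).
exact: List.in_map (covers a).
Qed.

Lemma disj_union_imagesC (X : PCat) (Z Y : Ob X) (f1 f2 : Hom X Z Y) :
  disj_union_images f1 f2 -> disj_union_images f2 f1.
Proof.
case=> cover disj incomp; split=> [y|x x' e|x x'].
- by have [x [e|e]] := cover y; exists x; [right|left].
- exact: disj x' x (esym e).
- by have [] := incomp x' x.
Qed.

Section Duality.
Variables (V : Variety) (X : PCat) (RP : RPDuality V X).

Lemma castD_surj (B : Aobj V) (f : Hcar B) : exists x, castD (flatD RP B) x = f.
Proof. by exists (cast (esym (f_equal (@projT1 _ _) (flatD RP B))) f); rewrite /castD castKV. Qed.

Lemma castD_inj (B : Aobj V) : injective (castD (flatD RP B)).
Proof. exact: can_inj (castK _). Qed.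

Lemma popen_finite (B : Aobj V) : finite_alg B -> forall U : fob (Dob RP B) -> Prop, popen U.
Proof.
suff transport (s : PData) : s = Hdata B -> (forall U, (projT2 (Hdata B)).2 U) ->
    forall U, (projT2 s).2 U.
  by move=> finB; exact: transport _ (flatD RP B) (Hopen_finite finB).
by move=> ->.
Qed.

Lemma unit_inj (A : Aobj V) : injective (proj1_sig (unit RP A)).
Proof. by have [g [gK _]] := unit_iso RP A; exact: can_inj gK. Qed.

Lemma unit_surj (A : Aobj V) (u : Eob RP (Dob RP A)) : exists a, proj1_sig (unit RP A) a = u.
Proof. by have [g [_ gK]] := unit_iso RP A; exists (proj1_sig g u). Qed.

Lemma Kcar_eval (B : Aobj V) (k : Kcar (fob (Dob RP B))) :
  exists b : B, forall y, proj1_sig (castD (flatD RP B) y) b = proj1_sig k y.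
Proof.
have [b eb] := unit_surj (cast (esym (flatE RP (Dob RP B))) k).
by exists b => y; rewrite -flat_unit eb castKV.
Qed.

Lemma eval_Emor_unit (A : Aobj V) (Y : Ob X) (phi : Hom X (Dob RP A) Y) u a x :
  proj1_sig (Emor RP phi) u = proj1_sig (unit RP A) a ->
  proj1_sig (cast (flatE RP Y) u) (fmor phi x) = proj1_sig (castD (flatD RP A) x) a.
Proof. by move=> e; rewrite -flatE_mor e flat_unit. Qed.

Lemma Emor_faithful (Y Z : Ob X) (phi1 phi2 : Hom X Y Z) :
  proj1_sig (Emor RP phi1) =1 proj1_sig (Emor RP phi2) -> phi1 = phi2.
Proof.
move=> /funext E12; have {}E12 : Emor RP phi1 = Emor RP phi2 by exact: proj1_sig_inj.
have [g [g_counit _]] := counit_iso RP Z.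
have counitK (phi : Hom X Y Z) : phi = ccomp g (ccomp (counit RP Z) phi).
  by rewrite ccomp_assoc g_counit ccomp_idl.
by rewrite (counitK phi1) (counitK phi2) -!counit_nat E12.
Qed.

Lemma Dmor_faithful (B C : Aobj V) (f g : ahom B C) :
  Dmor RP f = Dmor RP g -> proj1_sig f =1 proj1_sig g.
Proof. by move=> fg b; apply: unit_inj; rewrite -!unit_nat fg. Qed.

Lemma disj_union_separator (B C : Aobj V) (pa pb : ahom B C) :
  finite_alg B -> finite_alg C -> disj_union_images (Dmor RP pa) (Dmor RP pb) ->
  exists r, proj1_sig pa r = ltop C /\ proj1_sig pb r = lbot C.
Proof.
move=> finB finC [cover disj incomp].
pose in_a y := `[< exists x, fmor (Dmor RP pa) x = y >].
have in_a_up y y' : ple y y' -> in_a y -> in_a y'.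
  move=> yy' /asboolP [x ex]; apply/asboolP; have [x' [e|e]] := cover y'; first by exists x'.
  by case: (incomp x x').1; rewrite ex e.
have [r er] := Kcar_eval (exist _ in_a (And3 in_a_up (popen_finite finB _) (popen_finite finB _))).
exists r; split.
- apply: (hom_true_top finC) => f; have [x <-] := castD_surj f.
  by rewrite -flatD_mor er; apply/asboolP; exists x.
- apply: (hom_false_bot finC) => f; have [x <-] := castD_surj f.
  by rewrite -flatD_mor er; apply/asboolPn => -[x' /disj x'x]; exact: x'x.
Qed.

Lemma rel_proj_jointly_surj (A : Aobj V) (R : A -> A -> Prop) (HR : subuniverse2 R) :
  finite_alg A -> jointly_surj (Dmor RP (rel_fst HR)) (Dmor RP (rel_snd HR)).
Proof.
move=> finA y; have [f [ef|ef]] := rel_hom_factors finA (castD (flatD RP _) y);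
  have [x ex] := castD_surj f; exists x; [left|right];
  by apply: castD_inj; apply: hom_eq => r; rewrite flatD_mor ex ef.
Qed.

End Duality.

Section DualRelation.
Variables (V : Variety) (X : PCat) (RP : RPDuality V X) (A : Aobj V) (Y : Ob X).
Variables phi1 phi2 : Hom X (Dob RP A) Y.

Definition dual_rel (a b : A) : Prop := exists u : Eob RP Y,
  proj1_sig (Emor RP phi1) u = proj1_sig (unit RP A) a /\
  proj1_sig (Emor RP phi2) u = proj1_sig (unit RP A) b.

Lemma dual_rel_subuniverse2 : subuniverse2 dual_rel.
Proof.
move=> o args Rargs; pose u i := proj1_sig (cid (Rargs i)).
exists (aop u); rewrite !(proj2_sig (Emor RP _)) !(proj2_sig (unit RP A)).
by split; congr aop; apply: funext => i; case: (proj2_sig (cid (Rargs i))).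
Qed.

Lemma dual_rel_top_bot x x' : dual_rel (ltop A) (lbot A) ->
  ~ ple (fmor phi1 x) (fmor phi2 x') /\ fmor phi1 x <> fmor phi2 x'.
Proof.
case=> u [e1 e2]; set k := cast (flatE RP Y) u.
have k1 : proj1_sig k (fmor phi1 x) by rewrite (eval_Emor_unit _ e1) hom_top.
have k2 : ~~ proj1_sig k (fmor phi2 x') by rewrite (eval_Emor_unit _ e2) hom_bot.
split=> [le12|e12]; last by rewrite -e12 k1 in k2.
by case: (proj2_sig k) => k_up _ _; rewrite (k_up _ _ le12 k1) in k2.
Qed.

Lemma dual_rel_diagonal : (forall a b, dual_rel a b -> a = b) -> phi1 = phi2.
Proof.
move=> diag; apply: Emor_faithful => u.
have [a ea] := unit_surj (proj1_sig (Emor RP phi1) u).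
have [b eb] := unit_surj (proj1_sig (Emor RP phi2) u).
by rewrite -ea -eb (diag a b) //; exists u.
Qed.

End DualRelation.

Lemma dual_relC (V : Variety) (X : PCat) (RP : RPDuality V X) (A : Aobj V) (Y : Ob X)
    (phi1 phi2 : Hom X (Dob RP A) Y) a b :
  dual_rel phi1 phi2 a b -> dual_rel phi2 phi1 b a.
Proof. by case=> u [e1 e2]; exists u. Qed.

Section Dichotomy.
Variables (V : Variety) (X : PCat) (RP : RPDuality V X) (A : Aobj V).

Lemma semi_primal_dichotomy : semi_primal A ->
  forall (Y : Ob X) (phi1 phi2 : Hom X (Dob RP A) Y),
    jointly_surj phi1 phi2 -> disj_union_images phi1 phi2 \/ phi1 = phi2.
Proof.
move=> [_ sp] Y phi1 phi2 cover.
have [[B1 [B2 [sB1 sB2 prod]]]|[B [_ diag]]] :=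
  sp _ (dual_rel_subuniverse2 (phi1 := phi1) (phi2 := phi2)).
  have tb : dual_rel phi1 phi2 (ltop A) (lbot A).
    by apply/prod; split; apply: subuniverse_top0.
  have bt : dual_rel phi2 phi1 (ltop A) (lbot A).
    by apply/dual_relC/prod; split; apply: subuniverse_top0.
  left; split=> // x x'; first exact: (dual_rel_top_bot x x' tb).2.
  by split; [exact: (dual_rel_top_bot x x' tb).1|exact: (dual_rel_top_bot x' x bt).1].
by right; apply: dual_rel_diagonal => a b /diag[].
Qed.

Lemma dichotomy_semi_primal : finite_alg A ->
  (forall (Y : Ob X) (phi1 phi2 : Hom X (Dob RP A) Y),
    jointly_surj phi1 phi2 -> disj_union_images phi1 phi2 \/ phi1 = phi2) ->
  semi_primal A.
Proof.
move=> finA dichotomy; split=> [|R HR]; first exact: median_majority_term.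
have finR : finite_alg (rel_obj HR) := rel_alg_finite HR finA.
case: (dichotomy _ _ _ (rel_proj_jointly_surj (RP := RP) (HR := HR) finA)) => [du|Dfst_snd].
  have [r [r1 r2]] := disj_union_separator finR finA du.
  have [r' [r2' r1']] := disj_union_separator finR finA (disj_union_imagesC du).
  have Rtb : R (ltop A) (lbot A) by rewrite -r1 -r2; exact: (proj2_sig r).
  have Rbt : R (lbot A) (ltop A) by rewrite -r1' -r2'; exact: (proj2_sig r').
  left; exists (fun x => exists y, R x y), (fun y => exists x, R x y); split.
  - exact: subuniverse_rel_dom.
  - exact: subuniverse_rel_codom.
  - exact: subuniverse2_product.
right; exists (fun x => R x x); split=> [|x y]; first exact: (subuniverse_rel_diag HR).
split=> [Rxy|[<- Rxx //]].
have /= exy := Dmor_faithful Dfst_snd (exist _ (x, y) Rxy).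
by rewrite -exy in Rxy *.
Qed.

End Dichotomy.

Theorem theorem3p5 (V : Variety) (X : PCat) (R : RPDuality V X) (A : Aobj V) :
  finite_alg A ->
  (semi_primal A <->
   forall (Y : Ob X) (phi1 phi2 : Hom X (Dob R A) Y),
     jointly_surj phi1 phi2 -> disj_union_images phi1 phi2 \/ phi1 = phi2).
Proof.
move=> finA; split; first exact: semi_primal_dichotomy.
exact: dichotomy_semi_primal.
Qed.
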